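(* Fix $m,n$. The following are equivalent. (1) For any triangulations $\mathcal{T},\mathcal{T}'$ of $C(m,n)$, $\mathcal{T}\leqslant_1\mathcal{T}'$ if and only if $\mathcal{T}\leqslant_2\mathcal{T}'$. (2) For any triangulations $\mathcal{T},\mathcal{T}'$ of $C(m,n)$ with $\mathcal{T}<_2\mathcal{T}'$, there exists a triangulation $\mathcal{T}''$ of $C(m,n)$ with $\mathcal{T}\lessdot_1\mathcal{T}''\leqslant_2\mathcal{T}'$. (3) For any triangulations $\mathcal{T},\mathcal{T}'$ of $C(m,n)$ with $\mathcal{T}<_2\mathcal{T}'$, there exists a triangulation $\mathcal{T}''$ of $C(m,n)$ with $\mathcal{T}\leqslant_2\mathcal{T}''\lessdot_1\mathcal{T}'$.
   Context: $C(m,n)$ is the cyclic polytope: the convex hull in $\mathbb{R}^n$ of $p_n(t_i)=(t_i,t_i^2,\dots,t_i^n)$, $i\in[m]$, $t_1<\dots<t_m$. A triangulation is a set of $(n+1)$-subsets of $[m]$ whose geometric simplices form a simplicial complex with union $C(m,n)$. For $U\subseteq[m]$ with $|U|=n+2$, $C(U,n)$ has two triangulations, the lower one (the lower facets of $C(U,n+1)$) and the upper one (the upper facets), where an $n$-subset $F\subseteq U$ is a lower (upper) facet iff each $w\in U\setminus F$ has an even (odd) number of elements of $F$ above it. If $\{S\in\mathcal{T}:S\subseteq U\}$ is the lower triangulation of $C(U,n)$, replacing it by the upper one gives an increasing bistellar flip $\mathcal{T}'$ of $\mathcal{T}$, written $\mathcal{T}\lessdot_1\mathcal{T}'$; $\leqslant_1$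 is the reflexive transitive closure of $\lessdot_1$. Each triangulation $\mathcal{T}$ gives a piecewise-linear map $\sigma_{\mathcal{T}}:C(m,n)\to\mathbb{R}^{n+1}$ mapping each of its simplices affinely with $p_n(t_s)\mapsto p_{n+1}(t_s)$; $\mathcal{T}\leqslant_2\mathcal{T}'$ iff $\sigma_{\mathcal{T}}(z)_{n+1}\leqslant\sigma_{\mathcal{T}'}(z)_{n+1}$ for all $z$, and $<_2$ means $\leqslant_2$ and $\neq$. *)

From HB Require Import structures.
From mathcomp Require Import all_boot all_order all_algebra.
From mathcomp Require Import reals.
From Stdlib Require Import Relations.
Set Implicit Arguments. Unset Strict Implicit. Unset Printing Implicit Defensive.
Import Order.TTheory GRing.Theory Num.Theory.
Local Open Scope ring_scope.

Section CyclicPolytope.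
Variables (R : realFieldType) (m n : nat) (t : 'I_m -> R).

Definition moment (k : nat) (x : R) : 'rV[R]_k := \row_(j < k) x ^+ j.+1.

Definition bary (S : {set 'I_m}) (z : 'rV[R]_n) (l : 'I_m -> R) : Prop :=
  [/\ forall i, 0 <= l i,
      forall i, i \notin S -> l i = 0,
      \sum_i l i = 1
    & z = \sum_i l i *: moment n (t i)].

Definition conv (S : {set 'I_m}) (z : 'rV[R]_n) : Prop := exists l, bary S z l.

Definition cyclic_polytope (z : 'rV[R]_n) : Prop := conv [set: 'I_m] z.

(* T is a triangulation of C(m,n): (n+1)-subsets whose simplices cover C(m,n)
   and pairwise intersect properly (in a common face). *)
Definition triangulation (T : {set {set 'I_m}}) : Prop :=
  [/\ forall S, S \in T -> #|S| = n.+1,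
      forall z, cyclic_polytope z <-> exists2 S, S \in T & conv S z
    & forall S S', S \in T -> S' \in T ->
        forall z, (conv S z /\ conv S' z) <-> conv (S :&: S') z].

(* Gale evenness: lower / upper facets of C(U,n+1), i.e. lower / upper
   triangulations of C(U,n), for |U| = n+2 *)
Definition lower_tri (U : {set 'I_m}) : {set {set 'I_m}} :=
  [set F : {set 'I_m} | [&& F \subset U, #|F| == n.+1 &
     [forall w in U :\: F, ~~ odd #|[set f in F | (val w < val f)%N]|]]].

Definition upper_tri (U : {set 'I_m}) : {set {set 'I_m}} :=
  [set F : {set 'I_m} | [&& F \subset U, #|F| == n.+1 &
     [forall w in U :\: F, odd #|[set f in F | (val w < val f)%N]|]]].

Definition inc_flip (T T' : {set {set 'I_m}}) : Prop :=
  exists U : {set 'I_m},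
    [/\ #|U| = n.+2,
        [set S in T | S \subset U] = lower_tri U
      & T' = (T :\: lower_tri U) :|: upper_tri U].

Definition le1 : relation {set {set 'I_m}} :=
  clos_refl_trans _ (fun A B => [/\ triangulation A, triangulation B & inc_flip A B]).

(* graph of the last coordinate of sigma_T : h = sigma_T(z)_{n+1} *)
Definition sigma_last (T : {set {set 'I_m}}) (z : 'rV[R]_n) (h : R) : Prop :=
  exists2 S, S \in T &
    exists l, bary S z l /\ h = \sum_i l i * t i ^+ n.+1.

Definition le2 (T T' : {set {set 'I_m}}) : Prop :=
  forall z h h', sigma_last T z h -> sigma_last T' z h' -> h <= h'.

Definition lt2 (T T' : {set {set 'I_m}}) : Prop := le2 T T' /\ T <> T'.

End CyclicPolytope.

From HB Require Import structures.
From mathcomp Require Import all_boot all_order all_algebra.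
From mathcomp Require Import reals boolp.
From Stdlib Require Import Relations.
Set Implicit Arguments. Unset Strict Implicit. Unset Printing Implicit Defensive.
Import Order.TTheory GRing.Theory Num.Theory.
Local Open Scope ring_scope.

(* Two barycentric representations l, l' of one point in simplices of the
   moment curve have the same power sums of order <= n, hence
   sum_i (l_i - l'_i) g(t_i) = g_{n+1} (h l - h l') for every polynomial g of
   degree <= n+1, where h l = sum_i l_i t_i^(n+1).  With g the node polynomial
   of n vertices this gives uniqueness of barycentric coordinates, so sigma_T
   is well defined and <=_2 is a preorder on triangulations.  With g the node
   polynomial of a lower facet S of C(U,n), positive on U \ S by Gale evenness,
   it shows that an increasing flip raises sigma, strictly at the barycentre of
   the lower facet U \ {max U}.  What remains is order theory on the finite set
   of triangulations: (1) gives (2) and (3) by cutting off the first or last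
   flip of a chain; (2) gives (1) by induction on the number of triangulations
   above T; and (3) is (2) for the reversed relations. *)

Definition flip_step (T : Type) (D : T -> Prop) (flip : relation T) : relation T :=
  fun x y => [/\ D x, D y & flip x y].

Lemma clos_rt_flip_step_transp (T : Type) (D : T -> Prop) (flip : relation T) x y :
  clos_refl_trans _ (flip_step D (transp _ flip)) x y ->
  clos_refl_trans _ (flip_step D flip) y x.
Proof.
elim=> [a b [Da Db f]|a|a b c _ IHab _ IHbc].
- exact: rt_step _ _ _ _ (And3 Db Da f).
- exact: rt_refl.
- exact: rt_trans IHbc IHab.
Qed.

Section FlipOrder.
Variables (T : finType) (D : T -> Prop).

Section Preorder.
Variables (flip le : relation T).
Hypothesis le_refl : forall x, D x -> le x x.
Hypothesis le_trans : forall x y z, D y -> le x y -> le y z -> le x z.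
Hypothesis flip_le : forall x y, D x -> D y -> flip x y -> le x y.
Hypothesis flip_not_ge : forall x y, D x -> D y -> flip x y -> ~ le y x.

Local Notation step := (flip_step D flip).

Lemma clos_rt_flip_le x y : clos_refl_trans _ step x y -> D x -> le x y.
Proof.
move=> rxy; elim: (@clos_rt_rt1n _ _ _ _ rxy) => [a Da|a b c [Da Db fab] _ IH _].
  exact: le_refl.
exact: le_trans Db (flip_le Da Db fab) (IH Db).
Qed.

Let upper_set x := [set y | `[< D y /\ le x y >]].

Let flip_upper_set_lt x y :
  D x -> D y -> flip x y -> (#|upper_set y| < #|upper_set x|)%N.
Proof.
move=> Dx Dy fxy; apply: proper_card; rewrite properE; apply/andP; split.
  apply/subsetP => z; rewrite !inE => /asboolP[Dz lyz]; apply/asboolP.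
  by split=> //; exact: le_trans Dy (flip_le Dx Dy fxy) lyz.
apply/subsetPn; exists x; rewrite !inE; apply/asboolP.
  by split=> //; exact: le_refl.
by case=> _; exact: flip_not_ge.
Qed.

Lemma le_clos_rt_of_first_flip :
  (forall x y, D x -> D y -> le x y /\ x <> y ->
     exists z, [/\ D z, flip x z & le z y]) ->
  forall x y, D x -> D y -> le x y -> clos_refl_trans _ step x y.
Proof.
move=> first_flip x y Dx Dy; have [k] := ubnP #|upper_set x|.
elim: k x Dx => [//|k IH] x Dx ltk lxy.
have [<-|neq] := eqVneq x y; first exact: rt_refl.
have [z [Dz fxz lzy]] := first_flip x y Dx Dy (conj lxy (elimN eqP neq)).
apply: rt_trans (rt_step _ _ _ _ (And3 Dx Dz fxz)) (IH z Dz _ lzy).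
exact: leq_trans (flip_upper_set_lt Dx Dz fxz) ltk.
Qed.

End Preorder.

Variables (flip le : relation T).
Hypothesis le_refl : forall x, D x -> le x x.
Hypothesis le_trans : forall x y z, D y -> le x y -> le y z -> le x z.
Hypothesis flip_le : forall x y, D x -> D y -> flip x y -> le x y.
Hypothesis flip_not_ge : forall x y, D x -> D y -> flip x y -> ~ le y x.

Local Notation step := (flip_step D flip).

Lemma le_clos_rt_of_last_flip :
  (forall x y, D x -> D y -> le x y /\ x <> y ->
     exists z, [/\ D z, le x z & flip z y]) ->
  forall x y, D x -> D y -> le x y -> clos_refl_trans _ step x y.
Proof.
move=> last_flip x y Dx Dy lxy; apply: clos_rt_flip_step_transp.
apply: (le_clos_rt_of_first_flip (le := transp _ le)) lxy => //.
- by move=> a b c Db lba lcb; exact: le_trans lcb lba.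
- by move=> a b Da Db; exact: flip_le.
- by move=> a b Da Db; exact: flip_not_ge.
- move=> a b Da Db [lba neq].
  have [c [Dc lbc fca]] := last_flip b a Db Da (conj lba (nesym neq)).
  by exists c.
Qed.

Theorem flip_order_equiv :
  let P1 := forall x y, D x -> D y -> (clos_refl_trans _ step x y <-> le x y) in
  let P2 := forall x y, D x -> D y -> le x y /\ x <> y ->
    exists z, [/\ D z, flip x z & le z y] in
  let P3 := forall x y, D x -> D y -> le x y /\ x <> y ->
    exists z, [/\ D z, le x z & flip z y] in
  (P1 <-> P2) /\ (P1 <-> P3).
Proof.
move=> P1 P2 P3; split; split.
- move=> rt_le x y Dx Dy [lxy neq].
  have chain := @clos_rt_rt1n _ _ _ _ (proj2 (rt_le x y Dx Dy) lxy).
  move: Dy neq {lxy}; case: chain => [_ /(_ erefl)[]|z {}y [_ Dz fxz] rzy] Dy _.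
  by exists z; split=> //; apply/(rt_le z y Dz Dy)/clos_rt1n_rt.
- move=> first_flip x y Dx Dy; split; first by move/clos_rt_flip_le; apply.
  exact: le_clos_rt_of_first_flip.
- move=> rt_le x y Dx Dy [lxy neq].
  have chain := @clos_rt_rtn1 _ _ _ _ (proj2 (rt_le x y Dx Dy) lxy).
  move: Dy neq {lxy}; case: chain => [_ /(_ erefl)[]|z {}y [Dz _ fzy] rxz] Dy _.
  by exists z; split=> //; apply/(rt_le x z Dx Dz)/clos_rtn1_rt.
- move=> last_flip x y Dx Dy; split; first by move/clos_rt_flip_le; apply.
  exact: le_clos_rt_of_last_flip.
Qed.

End FlipOrder.

Section LiftedHeights.
Variables (R : realFieldType) (m n : nat) (t : 'I_m -> R).
Hypothesis t_increasing : forall i j : 'I_m, (val i < val j)%N -> t i < t j.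

Definition lift_height (l : 'I_m -> R) : R := \sum_i l i * t i ^+ n.+1.

Lemma t_inj : injective t.
Proof.
move=> i j tij; apply/val_inj.
by case: (ltngtP (val i) (val j)) => // /t_increasing; rewrite tij ltxx.
Qed.

Lemma moment_sum_coord (l : 'I_m -> R) (j : 'I_n) :
  (\sum_k l k *: moment n (t k)) 0 j = \sum_k l k * t k ^+ j.+1.
Proof. by rewrite summxE; apply: eq_bigr => k _; rewrite !mxE. Qed.

Lemma bary_power_sum (S S' : {set 'I_m}) (z : 'rV[R]_n) l l' k : (k <= n)%N ->
  bary t S z l -> bary t S' z l' ->
  \sum_i l i * t i ^+ k = \sum_i l' i * t i ^+ k.
Proof.
case: k => [|j] ltjn [_ _ l1 lz] [_ _ l'1 l'z].
  under eq_bigr do rewrite expr0 mulr1; under [RHS]eq_bigr do rewrite expr0 mulr1.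
  by rewrite l1 l'1.
by rewrite -!(moment_sum_coord _ (Ordinal ltjn)) -lz -l'z.
Qed.

Lemma bary_poly_gap (g : {poly R}) (S S' : {set 'I_m}) (z : 'rV[R]_n) l l' :
  (size g <= n.+2)%N -> bary t S z l -> bary t S' z l' ->
  \sum_i (l i - l' i) * g.[t i] = g`_n.+1 * (lift_height l - lift_height l').
Proof.
move=> sg bl bl'.
under eq_bigr do rewrite (horner_coef_wide _ sg) mulr_sumr.
rewrite exchange_big big_ord_recr /= big1 ?add0r => [|k _].
  rewrite /lift_height -sumrB mulr_sumr; apply: eq_bigr => i _.
  by rewrite -mulrBl mulrCA.
under eq_bigr do rewrite mulrCA mulrBl.
by rewrite -mulr_sumr sumrB (bary_power_sum _ bl bl') ?subrr ?mulr0 // -ltnS.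
Qed.

Definition node_poly (A : {set 'I_m}) : {poly R} := \prod_(f <- enum A) ('X - (t f)%:P).

Lemma size_node_poly (A : {set 'I_m}) : size (node_poly A) = #|A|.+1.
Proof. by rewrite size_prod_XsubC cardE. Qed.

Lemma node_poly_top_coef (A : {set 'I_m}) : (node_poly A)`_#|A| = 1.
Proof.
have /monicP := monic_prod_XsubC (enum A) xpredT t.
by rewrite /lead_coef -/(node_poly A) size_node_poly.
Qed.

Lemma horner_node_poly (A : {set 'I_m}) (x : R) :
  (node_poly A).[x] = \prod_(f in A) (x - t f).
Proof.
rewrite horner_prod big_enum /=.
by apply: eq_bigr => f _; rewrite hornerXsubC.
Qed.

Lemma node_poly_root (A : {set 'I_m}) (i : 'I_m) :
  i \in A -> (node_poly A).[t i] = 0.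
Proof. by move=> iA; rewrite horner_node_poly (bigD1 i) //= subrr mul0r. Qed.

Lemma node_poly_neq0 (A : {set 'I_m}) (i : 'I_m) :
  i \notin A -> (node_poly A).[t i] != 0.
Proof.
move=> iA; rewrite horner_node_poly; apply/prodf_neq0 => f fA.
by rewrite subr_eq0; apply: contraNneq iA => /t_inj ->.
Qed.

Lemma node_poly_gt0 (A : {set 'I_m}) (w : 'I_m) : w \notin A ->
  ~~ odd #|[set f in A | (val w < val f)%N]| -> 0 < (node_poly A).[t w].
Proof.
move=> wA even_above.
rewrite horner_node_poly (bigID (fun f => (val w < val f)%N)) /=.
have -> : \prod_(f in A | (val w < val f)%N) (t w - t f) =
          \prod_(f in [set f in A | (val w < val f)%N]) - (t f - t w).
  by apply: eq_big => [f|f _]; rewrite ?inE ?opprB.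
rewrite prodrN -signr_odd (negbTE even_above) expr0 mul1r.
apply: mulr_gt0; apply: prodr_gt0 => f.
  by rewrite inE => /andP[_ /t_increasing]; rewrite subr_gt0.
move=> /andP[fA]; rewrite -leqNgt leq_eqVlt => /orP[/eqP/val_inj efw|].
  by move: wA; rewrite -efw fA.
by move/t_increasing; rewrite subr_gt0.
Qed.

Lemma bary_subset (S S' : {set 'I_m}) (z : 'rV[R]_n) l :
  S \subset S' -> bary t S z l -> bary t S' z l.
Proof.
move=> sSS' [l0 lS l1 lz]; split=> // i iS'; apply: lS.
exact: contra (subsetP sSS' i) iS'.
Qed.

Lemma bary_cyclic_polytope (S : {set 'I_m}) (z : 'rV[R]_n) l :
  bary t S z l -> cyclic_polytope t z.
Proof. by move=> bl; exists l; apply: bary_subset bl; apply: subsetT. Qed.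

(* Against the node polynomial of [S :\ s], of degree [n], only the [s]-term
   of the gap survives. *)
Lemma bary_simplex_uniq (S : {set 'I_m}) (z : 'rV[R]_n) l l' : #|S| = n.+1 ->
  bary t S z l -> bary t S z l' -> l =1 l'.
Proof.
move=> cS bl bl' s; have [_ lS _ _] := bl; have [_ l'S _ _] := bl'.
have [sS|sNS] := boolP (s \in S); last by rewrite lS ?l'S.
have cSs : #|S :\ s| = n by move: cS; rewrite (cardsD1 s) sS add1n => -[].
have size_g : (size (node_poly (S :\ s)) <= n.+2)%N by rewrite size_node_poly cSs.
have := bary_poly_gap size_g bl bl'.
rewrite nth_default ?size_node_poly ?cSs // mul0r.
rewrite (bigD1 s) //= big1 ?addr0 => [|i ne_is].
  move/eqP; rewrite mulf_eq0 (negbTE (node_poly_neq0 _)) ?setD11 // orbF.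
  by rewrite subr_eq0 => /eqP.
have [iS|iNS] := boolP (i \in S); last by rewrite lS ?l'S // subrr mul0r.
by rewrite node_poly_root ?mulr0 // in_setD1 ne_is.
Qed.

Lemma triangulation_height_eq (T : {set {set 'I_m}}) (S S' : {set 'I_m})
    (z : 'rV[R]_n) l l' :
  triangulation n t T -> S \in T -> S' \in T -> bary t S z l -> bary t S' z l' ->
  lift_height l = lift_height l'.
Proof.
move=> [cT _ meetT] ST S'T bl bl'.
have [l'' bl''] : conv t (S :&: S') z.
  by apply/(meetT _ _ ST S'T); split; [exists l | exists l'].
have e := bary_simplex_uniq (cT _ ST) bl (bary_subset (subsetIl _ _) bl'').
have e' := bary_simplex_uniq (cT _ S'T) bl' (bary_subset (subsetIr _ _) bl'').
by apply: eq_bigr => i _; rewrite e e'.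
Qed.

Lemma sigma_last_fun (T : {set {set 'I_m}}) (z : 'rV[R]_n) h h' :
  triangulation n t T -> sigma_last t T z h -> sigma_last t T z h' -> h = h'.
Proof.
move=> tT [S ST [l [bl ->]]] [S' S'T [l' [bl' ->]]].
exact: triangulation_height_eq tT ST S'T bl bl'.
Qed.

Lemma le2_refl (T : {set {set 'I_m}}) : triangulation n t T -> le2 n t T T.
Proof. by move=> tT z h h' sh sh'; rewrite (sigma_last_fun tT sh sh'). Qed.

Lemma le2_trans (A B C : {set {set 'I_m}}) :
  triangulation n t B -> le2 n t A B -> le2 n t B C -> le2 n t A C.
Proof.
move=> [_ coverB _] leAB leBC z h h'' sA sC.
have [S _ [l [bl _]]] := sA.
have [S' S'B [l' bl']] := proj1 (coverB z) (bary_cyclic_polytope bl).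
have sB : sigma_last t B z (lift_height l') by exists S' => //; exists l'.
exact: le_trans (leAB _ _ _ sA sB) (leBC _ _ _ sB sC).
Qed.

Lemma node_poly_gap (S S' : {set 'I_m}) (z : 'rV[R]_n) l l' : #|S| = n.+1 ->
  bary t S z l -> bary t S' z l' ->
  lift_height l' = lift_height l + \sum_i l' i * (node_poly S).[t i].
Proof.
move=> cS bl bl'; have [_ lS _ _] := bl.
have size_g : (size (node_poly S) <= n.+2)%N by rewrite size_node_poly cS.
have := bary_poly_gap size_g bl bl'; rewrite -cS node_poly_top_coef mul1r.
under eq_bigr do rewrite mulrBl; rewrite sumrB big1 => [|i _].
  by rewrite sub0r => /eqP; rewrite eqr_oppLR opprB => /eqP ->; rewrite addrC subrK.
have [iS|iNS] := boolP (i \in S); first by rewrite node_poly_root ?mulr0.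
by rewrite lS ?mul0r.
Qed.

Lemma lower_tri_node_gt0 (U S : {set 'I_m}) (i : 'I_m) :
  S \in lower_tri n U -> i \in U :\: S -> 0 < (node_poly S).[t i].
Proof.
rewrite inE => /and3P[_ _ /forall_inP even_above] iUS.
by apply: node_poly_gt0 (even_above i iUS); case/setDP: iUS.
Qed.

Section LowerFacet.
Variables (U S S' : {set 'I_m}) (z : 'rV[R]_n) (l l' : 'I_m -> R).
Hypotheses (SL : S \in lower_tri n U) (cS : #|S| = n.+1) (sS'U : S' \subset U).
Hypotheses (bl : bary t S z l) (bl' : bary t S' z l').

Lemma lower_tri_gap_ge0 i : 0 <= l' i * (node_poly S).[t i].
Proof.
have [l'0 l'S' _ _] := bl'.
have [iS|iNS] := boolP (i \in S); first by rewrite node_poly_root ?mulr0.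
have [iS'|/l'S'->] := boolP (i \in S'); last by rewrite mul0r.
by rewrite mulr_ge0 // ltW // (lower_tri_node_gt0 SL) // inE iNS (subsetP sS'U).
Qed.

Lemma lower_tri_height_le : lift_height l <= lift_height l'.
Proof.
by rewrite (node_poly_gap cS bl bl') lerDl sumr_ge0 // => i _; apply: lower_tri_gap_ge0.
Qed.

Lemma lower_tri_height_eq : lift_height l' <= lift_height l -> bary t S z l'.
Proof.
rewrite (node_poly_gap cS bl bl') gerDl => gap_le0.
have gap0 : \sum_i l' i * (node_poly S).[t i] = 0.
  by apply/le_anti; rewrite gap_le0 sumr_ge0 // => i _; apply: lower_tri_gap_ge0.
have [l'0 l'S' l'1 l'z] := bl'; split=> // i iNS.
have [iS'|/l'S'//] := boolP (i \in S').
have g_gt0 : 0 < (node_poly S).[t i].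
  by rewrite (lower_tri_node_gt0 SL) // inE iNS (subsetP sS'U).
have /eqP := psumr_eq0P (fun j _ => lower_tri_gap_ge0 j) gap0 (i := i) isT.
by rewrite mulf_eq0 (gt_eqF g_gt0) orbF => /eqP.
Qed.

End LowerFacet.

Lemma flip_le2 (A B : {set {set 'I_m}}) :
  triangulation n t A -> triangulation n t B -> inc_flip n A B -> le2 n t A B.
Proof.
move=> tA tB [U [_ lowA defB]] z h h' [S SA [l [bl ->]]] [S' S'B [l' [bl' ->]]].
change (lift_height l <= lift_height l').
have [SL|SNL] := boolP (S \in lower_tri n U); last first.
  have SB : S \in B by rewrite defB in_setU in_setD SNL SA.
  by rewrite (triangulation_height_eq tB SB S'B bl bl').
move: S'B; rewrite defB in_setU in_setD => /orP[/andP[_ S'A]|].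
  by rewrite (triangulation_height_eq tA SA S'A bl bl').
rewrite inE => /and3P[S'U _ _]; have [cA _ _] := tA.
exact: lower_tri_height_le SL (cA _ SA) S'U bl bl'.
Qed.

Definition barycenter_weight (S : {set 'I_m}) (i : 'I_m) : R :=
  if i \in S then n.+1%:R^-1 else 0.

Definition barycenter (S : {set 'I_m}) : 'rV[R]_n :=
  \sum_i barycenter_weight S i *: moment n (t i).

Lemma barycenter_bary (S : {set 'I_m}) :
  #|S| = n.+1 -> bary t S (barycenter S) (barycenter_weight S).
Proof.
rewrite /barycenter_weight => cS; split=> // [i|i /negbTE->//|].
  by case: ifP; rewrite ?invr_ge0 ?ler0n.
by rewrite -big_mkcond /= sumr_const cS -[_ *+ _]mulr_natl mulfV ?pnatr_eq0.
Qed.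

Lemma barycenter_simplex_eq (S S' : {set 'I_m}) l : #|S| = n.+1 -> #|S'| = n.+1 ->
  bary t S (barycenter S) l -> bary t S' (barycenter S) l -> S = S'.
Proof.
move=> cS cS' bl [_ lS' _ _]; apply/eqP; rewrite eqEcard cS cS' leqnn andbT.
have weight_l := bary_simplex_uniq cS (barycenter_bary cS) bl.
apply/subsetP => i iS; apply: contraLR isT => iNS'.
move: (weight_l i); rewrite lS' // /barycenter_weight iS => /eqP.
by rewrite invr_eq0 pnatr_eq0.
Qed.

Lemma lower_tri_setD1_max (U : {set 'I_m}) (w : 'I_m) : #|U| = n.+2 -> w \in U ->
  (forall u, u \in U -> (val u <= val w)%N) -> U :\ w \in lower_tri n U.
Proof.
move=> cU wU w_max; rewrite inE subD1set (cardsD1 w) wU in cU *.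
rewrite add1n in cU; case: cU => ->; rewrite eqxx /=.
apply/forall_inP => u /setDP[uU]; rewrite in_setD1 uU andbT negbK => /eqP->.
rewrite (_ : [set f in U :\ w | _] = set0) ?cards0 //.
apply/setP => f; rewrite !inE ltnNge andbC.
by case: (boolP (f \in U)) => [/w_max->|]; rewrite ?andbF.
Qed.

Lemma lower_upper_tri_disjoint (U S : {set 'I_m}) :
  #|U| = n.+2 -> S \in lower_tri n U -> S \notin upper_tri n U.
Proof.
move=> cU; rewrite !inE => /and3P[sSU /eqP cS /forall_inP even_above].
apply/negP => /and3P[_ _ /forall_inP odd_above].
have [w wUS] : exists w, w \in U :\: S.
  by apply/set0Pn; rewrite -card_gt0 cardsD (setIidPr sSU) cU cS subSnn.
by move: (odd_above w wUS); rewrite (negbTE (even_above w wUS)).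
Qed.

Lemma flip_not_ge2 (A B : {set {set 'I_m}}) :
  triangulation n t A -> triangulation n t B -> inc_flip n A B -> ~ le2 n t B A.
Proof.
move=> [cA _ meetA] [cB coverB _] [U [cU lowA defB]] leBA.
have [u0 u0U] : exists u0, u0 \in U by apply/set0Pn; rewrite -card_gt0 cU.
have [w wU w_max] := arg_maxnP val u0U.
set S := U :\ w.
have SL : S \in lower_tri n U by apply: lower_tri_setD1_max.
have cS : #|S| = n.+1 by move: SL; rewrite inE => /and3P[_ /eqP].
have SA : S \in A by move: SL; rewrite -lowA inE => /andP[].
have bS := barycenter_bary cS.
have [S' S'B [l' bS']] := proj1 (coverB _) (bary_cyclic_polytope bS).
have le_heights : lift_height l' <= lift_height (barycenter_weight S).
  apply: (leBA (barycenter S)); first by exists S' => //; exists l'.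
  by exists S => //; exists (barycenter_weight S).
move: (S'B); rewrite defB in_setU in_setD => /orP[/andP[S'NL S'A]|S'U].
  have [l'' bSS'] : conv t (S :&: S') (barycenter S).
    by apply/(meetA _ _ SA S'A); split; [exists (barycenter_weight S) | exists l'].
  have eSS' := barycenter_simplex_eq cS (cB _ S'B)
    (bary_subset (subsetIl _ _) bSS') (bary_subset (subsetIr _ _) bSS').
  by move: S'NL; rewrite -eSS' SL.
have S'sU : S' \subset U by move: S'U; rewrite inE => /and3P[].
have bS'S := lower_tri_height_eq SL cS S'sU bS bS' le_heights.
have eSS' := barycenter_simplex_eq cS (cB _ S'B) bS'S bS'.
by move: S'U; rewrite -eSS' (negbTE (lower_upper_tri_disjoint cU SL)).
Qed.

End LiftedHeights.

Theorem lemma3p3 (R : realType) (m n : nat) (t : 'I_m -> R)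
  (ht : forall i j : 'I_m, (val i < val j)%N -> t i < t j) :
  let P1 := forall T T' : {set {set 'I_m}},
      triangulation n t T -> triangulation n t T' ->
      (le1 n t T T' <-> le2 n t T T') in
  let P2 := forall T T' : {set {set 'I_m}},
      triangulation n t T -> triangulation n t T' -> lt2 n t T T' ->
      exists T'' : {set {set 'I_m}},
        [/\ triangulation n t T'', inc_flip n T T'' & le2 n t T'' T'] in
  let P3 := forall T T' : {set {set 'I_m}},
      triangulation n t T -> triangulation n t T' -> lt2 n t T T' ->
      exists T'' : {set {set 'I_m}},
        [/\ triangulation n t T'', le2 n t T T'' & inc_flip n T'' T'] in
  (P1 <-> P2) /\ (P1 <-> P3).
Proof.
exact: flip_order_equiv (le2_refl ht) (@le2_trans _ _ _ t) (flip_le2 ht)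
  (flip_not_ge2 ht).
Qed.
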